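(* Let $X=(X^{(1)},\dots,X^{(p)})\in\mathbb{R}^p$ be a random vector with finite second moments and strictly positive definite covariance matrix $\Sigma_X$, let $\epsilon$ be a random variable with $E(\epsilon)=0$, $\mathrm{var}(\epsilon)=\sigma^2>0$, uncorrelated with $X^{(1)},\dots,X^{(p)}$, and let $Y=\delta+\sum_{j=1}^p\beta_jX^{(j)}+\epsilon$ with $\delta\in\mathbb{R}$, $\beta\in\mathbb{R}^p$. Suppose the distribution of $(X,Y)$ is partially faithful. Then for every $j\in\{1,\dots,p\}$: $\rho(Y,X^{(j)}\mid X^{(\mathcal{S})})\neq 0$ for all $\mathcal{S}\subseteq\{j\}^C$ if and only if $\beta_j\neq 0$.
   Context: $\rho(Z^{(1)},Z^{(2)}\mid W)$ denotes the population partial correlation of $Z^{(1)},Z^{(2)}$ given the collection $W$. For $\mathcal{S}\subseteq\{1,\dots,p\}$, $X^{(\mathcal{S})}=\{X^{(j)};j\in\mathcal{S}\}$ and $\{j\}^C=\{1,\dots,p\}\setminus\{j\}$. The distribution of $(X,Y)$ is partially faithful if for every $j$: if $\rho(Y,X^{(j)}\mid X^{(\mathcal{S})})=0$ for some $\mathcal{S}\subseteq\{j\}^C$, then $\rho(Y,X^{(j)}\mid X^{(\{j\}^C)})=0$. *)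

From HB Require Import structures.
From mathcomp Require Import all_boot all_order all_algebra.
From mathcomp Require Import all_classical all_reals all_analysis.
Set Implicit Arguments. Unset Strict Implicit. Unset Printing Implicit Defensive.
Import Order.TTheory GRing.Theory Num.Theory.
Local Open Scope ring_scope.

Section PartialCorrelation.
Context {d : measure_display} {T : measurableType d} {R : realType}
  (P : probability T R).

(* real-valued covariance (finite for L^2 variables) *)
Definition cov (U V : T -> R) : R := fine (covariance P U V).

Definition covmx (n : nat) (Z : 'I_n -> T -> R) : 'M[R]_n :=
  \matrix_(i, j) cov (Z i) (Z j).

Definition covrow (k : nat) (U : T -> R) (W : 'I_k -> T -> R) : 'rV[R]_k :=
  \row_i cov U (W i).

Definition pcov (k : nat) (U V : T -> R) (W : 'I_k -> T -> R) : R :=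
  cov U V - (covrow U W *m invmx (covmx W) *m (covrow V W)^T) 0 0.

Definition pcor (k : nat) (U V : T -> R) (W : 'I_k -> T -> R) : R :=
  pcov U V W / Num.sqrt (pcov U U W * pcov V V W).

(* the sub-collection X^(S) = {X^(j); j in S}, enumerated in increasing order *)
Definition subfam (p : nat) (X : 'I_p -> T -> R) (S : {set 'I_p})
  : 'I_#|S| -> T -> R := fun i => X (enum_val i).
Arguments subfam {p} X S _.

Definition pcorS (p : nat) (Y : T -> R) (X : 'I_p -> T -> R) (j : 'I_p)
  (S : {set 'I_p}) : R := pcor Y (X j) (subfam X S).

Definition partially_faithful (p : nat) (X : 'I_p -> T -> R) (Y : T -> R) :=
  forall j : 'I_p,
    (exists S : {set 'I_p}, S \subset [set~ j] /\ pcorS Y X j S = 0) ->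
    pcorS Y X j [set~ j] = 0.

Definition posdef (n : nat) (A : 'M[R]_n) :=
  forall v : 'rV[R]_n, v != 0 -> 0 < (v *m A *m v^T) 0 0.

End PartialCorrelation.

(* Partial covariances given a subfamily X^(A) are quadratic forms of the Schur
   complement of the A-block in Sigma_X.  For W = X^({j}^C), everything in Y but
   beta_j X^(j) + epsilon is a combination of W and is annihilated by that Schur
   complement; writing q > 0 for the partial variance of X^(j) given W, this gives
   pcov(Y, X^(j) | W) = beta_j q and pcov(Y, Y | W) = beta_j^2 q + sigma^2, so
   rho(Y, X^(j) | W) vanishes iff beta_j = 0.  Partial faithfulness reduces a
   vanishing rho(Y, X^(j) | X^(S)) to this case, and S = {j}^C is a witness when
   beta_j = 0. *)

From HB Require Import structures.
From mathcomp Require Import all_boot all_order all_algebra.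
From mathcomp Require Import all_classical all_reals all_analysis.
From mathcomp Require Import lra.
Import Order.TTheory GRing.Theory Num.Theory.
Set Implicit Arguments. Unset Strict Implicit. Unset Printing Implicit Defensive.
Local Open Scope ring_scope.

Lemma one_lee_two (R : realType) : (1 <= (2%:E : \bar R))%E.
Proof. by rewrite lee_fin ler1n. Qed.
#[local] Hint Resolve one_lee_two : core.

Section Covariance.
Context {d : measure_display} {T : measurableType d} {R : realType}
  (P : probability T R).

Let PT_fin_num : P setT \is a fin_num. Proof. exact: fin_num_measure. Qed.
Local Hint Resolve PT_fin_num : core.

Lemma cov_fin_num (U V : T -> R) : U \in Lfun P 2%:E -> V \in Lfun P 2%:E ->
  covariance P U V \is a fin_num.
Proof.
move=> U2 V2; apply: covariance_fin_num;
  [exact: Lfun_subset12 | exact: Lfun_subset12 | exact: Lfun2_mul_Lfun1].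
Qed.

Lemma covC (U V : T -> R) : cov P U V = cov P V U.
Proof. by rewrite /cov covarianceC. Qed.

Lemma cov_cstl (c : R) (Z : T -> R) : cov P (cst c) Z = 0.
Proof. by rewrite /cov covariance_cst_l. Qed.

Lemma covDl (U V Z : T -> R) :
  U \in Lfun P 2%:E -> V \in Lfun P 2%:E -> Z \in Lfun P 2%:E ->
  cov P (U \+ V) Z = cov P U Z + cov P V Z.
Proof. by move=> *; rewrite /cov covarianceDl // fineD // cov_fin_num. Qed.

Lemma covZl (a : R) (U Z : T -> R) : U \in Lfun P 2%:E -> Z \in Lfun P 2%:E ->
  cov P (a \o* U) Z = a * cov P U Z.
Proof.
move=> U2 Z2; rewrite /cov covarianceZl;
  [|exact: Lfun_subset12 | exact: Lfun_subset12 | exact: Lfun2_mul_Lfun1].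
by rewrite fineM // cov_fin_num.
Qed.

Lemma cov_suml (I : Type) (r : seq I) (F : I -> T -> R) (Z : T -> R) :
  (forall i, F i \in Lfun P 2%:E) -> Z \in Lfun P 2%:E ->
  cov P (\sum_(i <- r) F i) Z = \sum_(i <- r) cov P (F i) Z.
Proof.
move=> F2 Z2; elim: r => [|i r IHr]; first by rewrite !big_nil -(cov_cstl 0 Z).
by rewrite !big_cons -IHr -covDl // rpred_sum.
Qed.

Lemma covmx_sym (n : nat) (Z : 'I_n -> T -> R) : (covmx P Z)^T = covmx P Z.
Proof. by apply/matrixP => a c; rewrite !mxE covC. Qed.

End Covariance.

Lemma posdef_unitmx (R : realType) m (A : 'M[R]_m) : posdef A -> A \in unitmx.
Proof.
move=> A_pd; rewrite -row_free_unit -kermx_eq0; apply/negPn/negP => kerA_neq0.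
have [i ker_i] : exists i, row i (kermx A) != 0.
  apply/not_existsP => /= ker0; move/eqP: kerA_neq0; apply.
  by apply/row_matrixP => i; rewrite row0; apply/eqP/negPn/negP/ker0.
by have := A_pd _ ker_i; rewrite -row_mul mulmx_ker row0 mul0mx mxE ltxx.
Qed.

Section SchurComplement.
Variables (R : realType) (n k : nat) (S : 'M[R]_n) (E : 'M[R]_(k, n)).
Hypotheses (S_sym : S^T = S) (S_posdef : posdef S) (E_orth : E *m E^T = 1%:M).

Lemma posdef_compress : posdef (E *m S *m E^T).
Proof.
move=> v v_neq0; have vE_neq0 : v *m E != 0.
  by apply: contra v_neq0 => /eqP vE0; rewrite -(mulmx1 v) -E_orth mulmxA vE0 mul0mx.
by have := S_posdef vE_neq0; rewrite trmx_mul !mulmxA.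
Qed.

Let G := E *m S *m E^T.
Let G_unit : G \in unitmx. Proof. exact/posdef_unitmx/posdef_compress. Qed.

Definition schur := S - S *m E^T *m invmx G *m E *m S.

Lemma mulmx_schur : E *m schur = 0.
Proof. by rewrite mulmxBr !mulmxA -/G mulmxV // mul1mx subrr. Qed.

Lemma schur_mulmx_tr : schur *m E^T = 0.
Proof.
rewrite mulmxBl.
have -> : S *m E^T *m invmx G *m E *m S *m E^T = S *m E^T *m (invmx G *m G).
  by rewrite /G !mulmxA.
by rewrite mulVmx // mulmx1 subrr.
Qed.

Lemma schur_form (x y : 'rV[R]_n) :
  (x *m S *m y^T) 0 0 - (x *m S *m E^T *m invmx G *m (y *m S *m E^T)^T) 0 0
  = (x *m schur *m y^T) 0 0.
Proof.
have subE (A B : 'M[R]_1) : (A - B) 0 0 = A 0 0 - B 0 0 by rewrite !mxE.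
by rewrite -subE mulmxBr mulmxBl !trmx_mul trmxK S_sym !mulmxA.
Qed.

Lemma schur_delta_gt0 (j : 'I_n) : E *m (delta_mx 0 j : 'rV[R]_n)^T = 0 ->
  0 < ((delta_mx 0 j : 'rV[R]_n) *m schur *m (delta_mx 0 j : 'rV[R]_n)^T) 0 0.
Proof.
move=> Ej0; set e := delta_mx 0 j.
(* [v] is [e] minus its S-orthogonal projection on the row space of [E] *)
pose v := e - e *m S *m E^T *m invmx G *m E.
have vSE0 : v *m S *m E^T = 0.
  rewrite !mulmxBl.
  have -> : e *m S *m E^T *m invmx G *m E *m S *m E^T = e *m S *m E^T *m (invmx G *m G).
    by rewrite /G !mulmxA.
  by rewrite mulVmx // mulmx1 subrr.
have vSv : v *m S *m v^T = e *m schur *m e^T.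
  rewrite {2}/v raddfB /= mulmxBr.
  have -> : v *m S *m (e *m S *m E^T *m invmx G *m E)^T
          = v *m S *m E^T *m (e *m S *m E^T *m invmx G)^T.
    by rewrite trmx_mul mulmxA.
  rewrite vSE0 mul0mx subr0 /v /schur !mulmxBl mulmxBr.
  by rewrite mulmxBl !mulmxA.
have v_neq0 : v != 0.
  apply: contraTneq isT => v0.
  have : v *m e^T = e *m e^T by rewrite /v mulmxBl -(mulmxA _ E) Ej0 mulmx0 subr0.
  rewrite v0 mul0mx /e trmx_delta mul_delta_mx => /matrixP /(_ 0 0).
  by rewrite !mxE /= => /eqP; rewrite eq_sym oner_eq0.
by have := S_posdef v_neq0; rewrite vSv.
Qed.

Lemma schur_row_space (u : 'rV[R]_n) : u *m E^T *m E = u ->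
  u *m schur = 0 /\ schur *m u^T = 0.
Proof.
move=> uE; split; first by rewrite -uE -mulmxA mulmx_schur mulmx0.
by rewrite -uE trmx_mul mulmxA schur_mulmx_tr mul0mx.
Qed.

Lemma schur_form_rank_one (c : R) (e u : 'rV[R]_n) : u *m E^T *m E = u ->
  ((c *: e + u) *m schur *m e^T) 0 0 = c * (e *m schur *m e^T) 0 0 /\
  ((c *: e + u) *m schur *m (c *: e + u)^T) 0 0
    = c ^+ 2 * (e *m schur *m e^T) 0 0.
Proof.
move=> /schur_row_space [uM Mu].
have eM : (c *: e + u) *m schur = c *: (e *m schur) by rewrite mulmxDl uM addr0 scalemxAl.
split; first by rewrite eM -scalemxAl mxE.
have eMu : e *m schur *m u^T = 0 by rewrite -mulmxA Mu mulmx0.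
rewrite eM [(_ + _)^T]raddfD /= mulmxDr -!scalemxAl eMu scaler0 addr0 linearZ /= -scalemxAr.
by rewrite !mxE mulrA expr2.
Qed.

End SchurComplement.

Section Selection.
Variables (R : comNzRingType) (p : nat) (A : {set 'I_p}).

Definition selmx : 'M[R]_(#|A|, p) := \matrix_(i, m) (enum_val i == m)%:R.

Lemma mul_selmx c (B : 'M[R]_(p, c)) i m : (selmx *m B) i m = B (enum_val i) m.
Proof.
rewrite mxE (bigD1 (enum_val i)) //= mxE eqxx mul1r big1 ?addr0 // => m' m'_neq.
by rewrite mxE eq_sym (negbTE m'_neq) mul0r.
Qed.

Lemma mul_tr_selmx c (B : 'M[R]_(c, p)) i m : (B *m selmx^T) i m = B i (enum_val m).
Proof. by rewrite -[B *m _]trmxK trmx_mul trmxK mxE mul_selmx mxE. Qed.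

Lemma selmx_orth : selmx *m selmx^T = 1%:M.
Proof. by apply/matrixP => i i'; rewrite mul_selmx !mxE (inj_eq enum_val_inj) eq_sym. Qed.

Lemma selmx_delta j : j \notin A -> selmx *m (delta_mx 0 j : 'rV[R]_p)^T = 0.
Proof.
move=> jA; apply/matrixP => i z; rewrite mul_selmx !mxE.
have -> : (enum_val i == j) = false by apply: contraNF jA => /eqP <-; exact: enum_valP.
by rewrite andbF.
Qed.

Lemma selmx_support (u : 'rV[R]_p) : (forall m, m \notin A -> u 0 m = 0) ->
  u *m selmx^T *m selmx = u.
Proof.
move=> u_supp; apply/rowP => m; rewrite mxE.
under eq_bigr => i _ do rewrite mul_tr_selmx mxE.
rewrite -(big_enum_val (fun x => u 0 x * (x == m)%:R)) /=.
have [mA | mA] := boolP (m \in A).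
  rewrite (bigD1 m) //= eqxx mulr1 big1 ?addr0 // => x /andP[_ /negbTE ->].
  by rewrite mulr0.
rewrite u_supp // big1 // => x xA.
have -> : (x == m) = false by apply: contraNF mA => /eqP <-.
by rewrite mulr0.
Qed.

End Selection.

Section PartialCovariance.
Context {d : measure_display} {T : measurableType d} {R : realType}
  (P : probability T R).
Variables (p : nat) (X : 'I_p -> T -> R) (A : {set 'I_p}).

Lemma covmx_subfam :
  covmx P (subfam X (S := A)) = selmx R A *m covmx P X *m (selmx R A)^T.
Proof. by apply/matrixP => a c; rewrite mul_tr_selmx mul_selmx !mxE. Qed.

Lemma covrow_subfam (U : T -> R) :
  covrow P U (subfam X (S := A)) = covrow P U X *m (selmx R A)^T.
Proof. by apply/rowP => a; rewrite mul_tr_selmx !mxE. Qed.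

Lemma pcov_subfam (U V : T -> R) (x y : 'rV[R]_p) :
  covrow P U X = x *m covmx P X -> covrow P V X = y *m covmx P X ->
  pcov P U V (subfam X (S := A)) = cov P U V - (x *m covmx P X *m y^T) 0 0
                            + (x *m schur (covmx P X) (selmx R A) *m y^T) 0 0.
Proof.
move=> Ux Vy; rewrite /pcov covmx_subfam !covrow_subfam Ux Vy.
rewrite -(schur_form _ (covmx_sym P X)); lra.
Qed.

Lemma pcor_eq0 (k : nat) (U V : T -> R) (W : 'I_k -> T -> R) :
  0 < pcov P U U W -> 0 < pcov P V V W -> (pcor P U V W == 0) = (pcov P U V W == 0).
Proof.
move=> UU_gt0 VV_gt0; rewrite /pcor mulf_eq0 invr_eq0 orb_idr // => /eqP sqrt0.
by move: (mulr_gt0 UU_gt0 VV_gt0); rewrite -sqrtr_gt0 sqrt0 ltxx.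
Qed.

End PartialCovariance.

Section LinearModel.
Context {d : measure_display} {T : measurableType d} {R : realType}
  (P : probability T R).
Variables (p : nat) (X : 'I_p -> T -> R) (eps : T -> R) (delta : R)
  (beta : 'I_p -> R).
Hypotheses (X_L2 : forall j, X j \in Lfun P 2%:E) (eps_L2 : eps \in Lfun P 2%:E)
  (X_eps_uncor : forall j, covariance P (X j) eps = 0%E).

Let Y := fun w => delta + \sum_(j < p) beta j * X j w + eps w.
Let b : 'rV[R]_p := \row_i beta i.

Let betaX_L2 i : beta i \o* X i \in Lfun P 2%:E. Proof. by apply: Lfun_scale; rewrite ?ler1n. Qed.
Let cst_L2 : cst delta \in Lfun P 2%:E. Proof. exact: Lfun_cst. Qed.
Local Hint Resolve betaX_L2 cst_L2 : core.

Let Y_sum : Y = cst delta \+ \sum_(i < p) (beta i \o* X i) \+ eps.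
Proof.
apply/funext => w; rewrite /Y /= fct_sumE.
by congr (_ + _ + _); apply: eq_bigr => i _; rewrite /= mulrC.
Qed.

Lemma linear_model_L2 : Y \in Lfun P 2%:E.
Proof. by rewrite Y_sum !rpredD // rpred_sum. Qed.

Lemma cov_linear_model (Z : T -> R) : Z \in Lfun P 2%:E ->
  cov P Y Z = \sum_(i < p) beta i * cov P (X i) Z + cov P eps Z.
Proof.
move=> Z2; rewrite Y_sum covDl ?rpredD ?rpred_sum // covDl ?rpred_sum //.
rewrite cov_cstl add0r cov_suml //; congr (_ + _).
by apply: eq_bigr => i _; rewrite covZl.
Qed.

Lemma covrow_linear_model : covrow P Y X = b *m covmx P X.
Proof.
apply/rowP => m; rewrite !mxE cov_linear_model // covC /cov X_eps_uncor addr0.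
by apply: eq_bigr => i _; rewrite !mxE.
Qed.

Lemma cov_linear_model_self :
  cov P Y Y = (b *m covmx P X *m b^T) 0 0 + cov P eps eps.
Proof.
have covYX i : cov P Y (X i) = (b *m covmx P X) 0 i.
  by rewrite -covrow_linear_model mxE.
rewrite cov_linear_model ?linear_model_L2 //; congr (_ + _).
  by rewrite mxE; apply: eq_bigr => i _; rewrite covC covYX !mxE mulrC.
rewrite covC cov_linear_model // big1 ?add0r // => i _.
by rewrite /cov X_eps_uncor mulr0.
Qed.

Hypothesis X_posdef : posdef (covmx P X).
Variable j : 'I_p.

Let W := subfam X (S := [set~ j]).
Let e : 'rV[R]_p := delta_mx 0 j.
Let M := schur (covmx P X) (selmx R [set~ j]).

Let covrow_X : covrow P (X j) X = e *m covmx P X.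
Proof. by apply/rowP => m; rewrite -rowE !mxE. Qed.

Let pcov_X_compl : pcov P (X j) (X j) W = (e *m M *m e^T) 0 0.
Proof.
rewrite (pcov_subfam _ covrow_X covrow_X) /e trmx_delta -colE -rowE !mxE.
by rewrite subrr add0r.
Qed.

Lemma pvar_compl_gt0 : 0 < pcov P (X j) (X j) W.
Proof.
rewrite pcov_X_compl; apply: (schur_delta_gt0 X_posdef (selmx_orth _ _)).
by apply: selmx_delta; rewrite !inE eqxx.
Qed.

Let b_rank_one : (b *m M *m e^T) 0 0 = beta j * (e *m M *m e^T) 0 0 /\
  (b *m M *m b^T) 0 0 = beta j ^+ 2 * (e *m M *m e^T) 0 0.
Proof.
have b_rest_in_compl :
    (b - beta j *: e) *m (selmx R [set~ j])^T *m selmx R [set~ j] = b - beta j *: e.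
  apply: selmx_support => m; rewrite !inE negbK => /eqP ->.
  by rewrite !mxE !eqxx mulr1 subrr.
have := schur_form_rank_one X_posdef (selmx_orth _ _) (beta j) e b_rest_in_compl.
by rewrite addrC subrK.
Qed.

Lemma pcov_linear_model_compl : pcov P Y (X j) W = beta j * pcov P (X j) (X j) W.
Proof.
have covYX : cov P Y (X j) = (b *m covmx P X *m e^T) 0 0.
  by rewrite /e trmx_delta -colE -covrow_linear_model !mxE.
rewrite (pcov_subfam _ covrow_linear_model covrow_X) covYX subrr add0r.
by rewrite pcov_X_compl b_rank_one.1.
Qed.

Lemma pvar_linear_model_compl :
  pcov P Y Y W = beta j ^+ 2 * pcov P (X j) (X j) W + cov P eps eps.
Proof.
rewrite (pcov_subfam _ covrow_linear_model covrow_linear_model).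
rewrite cov_linear_model_self pcov_X_compl b_rank_one.2; lra.
Qed.

Lemma pcorS_linear_model_compl_eq0 : 0 < cov P eps eps ->
  (pcorS P Y X j [set~ j] == 0) = (beta j == 0).
Proof.
move=> eps_var_gt0; have q_gt0 := pvar_compl_gt0.
rewrite /pcorS pcor_eq0 // ?pcov_linear_model_compl ?mulf_eq0 ?(gt_eqF q_gt0) ?orbF //.
rewrite pvar_linear_model_compl.
by have := mulr_ge0 (sqr_ge0 (beta j)) (ltW q_gt0); lra.
Qed.

End LinearModel.

Theorem corollary1 (d : measure_display) (T : measurableType d) (R : realType)
  (P : probability T R) (p : nat) (X : 'I_p -> T -> R) (eps : T -> R)
  (delta : R) (beta : 'I_p -> R) (sigma2 : R) :
  (forall j, X j \in Lfun P 2%:E) ->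
  posdef (covmx P X) ->
  eps \in Lfun P 2%:E ->
  ('E_P[eps] = 0)%E ->
  0 < sigma2 -> 'V_P[eps] = sigma2%:E ->
  (forall j, covariance P (X j) eps = 0%E) ->
  let Y := fun w => delta + \sum_(j < p) beta j * X j w + eps w in
  partially_faithful P X Y ->
  forall j : 'I_p,
    (forall S : {set 'I_p}, S \subset [set~ j] -> pcorS P Y X j S != 0)
    <-> beta j != 0.
Proof.
move=> X_L2 X_posdef eps_L2 _ sigma2_gt0 eps_var X_eps_uncor Y faithful j.
have eps_var_gt0 : 0 < cov P eps eps by rewrite /cov -/('V_P[eps]) eps_var.
have compl_eq0 := pcorS_linear_model_compl_eq0 delta beta X_L2 eps_L2 X_eps_uncor
  X_posdef j eps_var_gt0.
split=> [all_neq0 | beta_neq0 S S_compl].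
  by rewrite -compl_eq0 all_neq0.
apply: contra beta_neq0 => /eqP pcor_S0.
by rewrite -compl_eq0 (faithful j); [| exists S].
Qed.
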